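(* Let $a>0$, $b>0$, $c\ge 0$ be constants and consider, for a function $u(t,x)$ on $t>0$, $x>0$, the non-linear Black--Scholes equation $$u_t+ax^2u_{xx}+bx^3u_{xx}^2+cxu_x-cu=0.$$ Define new variables $(\bar t,\bar x,\bar u)$ by if $c=0$: $\bar t=t$, $\bar x=\log\frac{x}{b}$, $\bar u=\frac{bu}{x}+\frac a2\log\frac xb-\frac{a^2}{4}t$; if $c>0$: $\bar t=ct$, $\bar x=\log\frac{cx}{b}-ct$, $\bar u=\frac{bu}{cx}+\frac{a}{2c}\log\frac{cx}{b}-\frac a2\left(1+\frac{a}{2c}\right)t$. Then $u(t,x)$ is a (sufficiently smooth) solution of the Black--Scholes equation above if and only if $\bar u$, regarded as a function of $(\bar t,\bar x)$, satisfies $$\bar u_{\bar t}+\left(\bar u_{\bar x}+\bar u_{\bar x\bar x}\right)^2=0.$$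
   Context: Here $\log$ is the natural logarithm. In the formula for $\bar u$ the variable $t$ is the original time variable. *)

From Stdlib Require Import Reals.
From Coquelicot Require Import Coquelicot.
Open Scope R_scope.

Definition d1 (u : R -> R -> R) (t x : R) : R := Derive (fun s => u s x) t.
Definition d2 (u : R -> R -> R) (t x : R) : R := Derive (fun y => u t y) x.

Definition smooth_BS (u : R -> R -> R) : Prop :=
  forall t x, 0 < t -> 0 < x ->
    ex_derive (fun s => u s x) t /\
    ex_derive (fun y => u t y) x /\
    ex_derive (fun y => d2 u t y) x /\
    continuous (fun p : R * R => d1 u (fst p) (snd p)) (t, x) /\
    continuous (fun p : R * R => d2 u (fst p) (snd p)) (t, x).

Definition solves_BS (a b c : R) (u : R -> R -> R) : Prop :=
  forall t x, 0 < t -> 0 < x ->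
    d1 u t x + a * x ^ 2 * d2 (d2 u) t x + b * x ^ 3 * (d2 (d2 u) t x) ^ 2
      + c * x * d2 u t x - c * u t x = 0.

Definition solves_target (U : R -> R -> R) : Prop :=
  forall tb xb, 0 < tb ->
    d1 U tb xb + (d2 U tb xb + d2 (d2 U) tb xb) ^ 2 = 0.

(* Case c = 0: tb = t, xb = ln (x/b); inverse t = tb, x = b * exp xb.
   ubar = b u / x + a/2 ln(x/b) - a^2/4 t. *)
Definition ubar0 (a b : R) (u : R -> R -> R) (tb xb : R) : R :=
  let t := tb in
  let x := b * exp xb in
  b * u t x / x + a / 2 * ln (x / b) - a ^ 2 / 4 * t.

(* Case c > 0: tb = c t, xb = ln (c x / b) - c t;
   inverse t = tb / c, x = (b / c) * exp (xb + tb).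
   ubar = b u / (c x) + a/(2c) ln(c x / b) - a/2 (1 + a/(2c)) t. *)
Definition ubarc (a b c : R) (u : R -> R -> R) (tb xb : R) : R :=
  let t := tb / c in
  let x := b / c * exp (xb + tb) in
  b * u t x / (c * x) + a / (2 * c) * ln (c * x / b)
    - a / 2 * (1 + a / (2 * c)) * t.

(** Both substitutions are instances of one change of variables
    [t = lam tb], [x = beta e^y] with [y = xb + mu tb], and
    [ubar = e^(-y) u + alpha y - gamma tb].  Then [ubar_xb + ubar_xbxb]
    collapses to [alpha + beta x u_xx], and when [2 alpha = a lam],
    [beta = b lam], [mu = c lam] and [gamma = alpha^2 + alpha mu] the chain rule
    gives [ubar_tb + (ubar_xb + ubar_xbxb)^2 = lam e^(-y) (u_t + a x^2 u_xx + ...)].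
    Since [(tb, xb) |-> (t, x)] maps [tb > 0] onto [t > 0, x > 0], the two
    equations are equivalent. *)

From Stdlib Require Import Reals Lra FunctionalExtensionality.
From Coquelicot Require Import Coquelicot.
Open Scope R_scope.

(* The increment from (x, y) to (s, r) is split at (x, r): the step in the first
   variable is controlled by the mean value theorem and the continuity of the
   first partial, the step in the second by the second partial. *)
Lemma differentiable_pt_lim_of_partials (f : R -> R -> R) x y :
  locally_2d (fun s r => ex_derive (fun s' => f s' r) s) x y ->
  ex_derive (fun r => f x r) y ->
  continuity_2d_pt (fun s r => Derive (fun s' => f s' r) s) x y ->
  differentiable_pt_lim f x y
    (Derive (fun s => f s y) x) (Derive (fun r => f x r) y).
Proof.
intros [d Hd] Hy Hc eps.
assert (He2 : 0 < eps / 2) by (destruct eps; simpl; lra).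
destruct (Hc (mkposreal _ He2)) as [d1 Hd1]; simpl in Hd1.
destruct (proj1 (is_derive_Reals _ _ _) (Derive_correct _ _ Hy) _ He2) as [d2 Hd2].
set (fx := Derive (fun s => f s y) x); set (fy := Derive (fun r => f x r) y).
change (Derive (fun r : R_AbsRing => f x r) y) with fy in Hd2.
assert (Hdm : 0 < Rmin d (Rmin d1 d2)).
{ destruct d, d1, d2; simpl; repeat apply Rmin_pos; lra. }
exists (mkposreal _ Hdm); simpl; intros s r Hs Hr.
pose proof (Rmin_l d (Rmin d1 d2)); pose proof (Rmin_r d (Rmin d1 d2)).
pose proof (Rmin_l d1 d2); pose proof (Rmin_r d1 d2).
destruct (MVT_cor4 (fun s' => f s' r) (fun c => Derive (fun s' => f s' r) c)
            x (Rabs (s - x))) with (b := s) as [cc [Hmvt Hcc]].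
{ intros c0 Hc0; apply Derive_correct, Hd; lra. }
{ lra. }
assert (Hcx : Rabs (Derive (fun s' => f s' r) cc - fx) < eps / 2)
  by (apply (Hd1 cc r); lra).
assert (Hstep_s : Rabs (f s r - f x r - fx * (s - x)) <= eps / 2 * Rabs (s - x)).
{ rewrite Hmvt.
  replace (Derive (fun s' => f s' r) cc * (s - x) - fx * (s - x))
    with ((Derive (fun s' => f s' r) cc - fx) * (s - x)) by ring.
  rewrite Rabs_mult; apply Rmult_le_compat_r; [apply Rabs_pos | lra]. }
assert (Hstep_r : Rabs (f x r - f x y - fy * (r - y)) <= eps / 2 * Rabs (r - y)).
{ destruct (Req_dec (r - y) 0) as [Hry | Hry].
  - replace r with y by lra; rewrite !Rminus_diag, Rmult_0_r, Rminus_0_r, Rabs_R0.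
    lra.
  - assert (Hq := Hd2 (r - y) Hry ltac:(lra)).
    replace (y + (r - y)) with r in Hq by ring.
    replace (f x r - f x y - fy * (r - y))
      with (((f x r - f x y) / (r - y) - fy) * (r - y)) by (field; auto).
    rewrite Rabs_mult; apply Rmult_le_compat_r; [apply Rabs_pos | lra]. }
eapply Rle_trans.
{ replace (f s r - f x y - (fx * (s - x) + fy * (r - y)))
    with ((f s r - f x r - fx * (s - x)) + (f x r - f x y - fy * (r - y))) by ring.
  apply Rabs_triang. }
pose proof (Rmax_l (Rabs (s - x)) (Rabs (r - y))).
pose proof (Rmax_r (Rabs (s - x)) (Rabs (r - y))).
nra.
Qed.

Lemma smooth_BS_differentiable u t x : smooth_BS u -> 0 < t -> 0 < x ->
  differentiable_pt_lim u t x (d1 u t x) (d2 u t x).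
Proof.
intros Hs Ht Hx; apply differentiable_pt_lim_of_partials.
- exists (mkposreal _ (Rmin_pos _ _ Ht Hx)); simpl; intros s r Hs' Hr.
  pose proof (Rmin_l t x); pose proof (Rmin_r t x).
  apply Rabs_def2 in Hs'; apply Rabs_def2 in Hr.
  apply (Hs s r); lra.
- apply (Hs t x Ht Hx).
- apply continuity_2d_pt_filterlim, (Hs t x Ht Hx).
Qed.

Definition BS_op (a b c : R) (u : R -> R -> R) (t x : R) : R :=
  d1 u t x + a * x ^ 2 * d2 (d2 u) t x + b * x ^ 3 * (d2 (d2 u) t x) ^ 2
    + c * x * d2 u t x - c * u t x.

Definition target_op (U : R -> R -> R) (tb xb : R) : R :=
  d1 U tb xb + (d2 U tb xb + d2 (d2 U) tb xb) ^ 2.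

Definition log_transform (lam beta mu alpha gamma : R) (u : R -> R -> R)
    (tb xb : R) : R :=
  / exp (xb + mu * tb) * u (lam * tb) (beta * exp (xb + mu * tb))
    + alpha * (xb + mu * tb) - gamma * tb.

Section LogTransform.

Variables (lam beta mu alpha gamma : R) (u : R -> R -> R).
Hypotheses (Hlam : 0 < lam) (Hbeta : 0 < beta) (Hsmooth : smooth_BS u).

Let V := log_transform lam beta mu alpha gamma u.

Lemma log_transform_image_pos tb xb : 0 < tb ->
  0 < lam * tb /\ 0 < beta * exp (xb + mu * tb).
Proof.
intros Htb; split; apply Rmult_lt_0_compat; auto using exp_pos.
Qed.

Lemma d2_log_transform tb xb : 0 < tb ->
  d2 V tb xb =
    - / exp (xb + mu * tb) * u (lam * tb) (beta * exp (xb + mu * tb))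
    + beta * d2 u (lam * tb) (beta * exp (xb + mu * tb)) + alpha.
Proof.
intros Htb; destruct (log_transform_image_pos tb xb Htb) as [Ht Hx].
unfold d2 at 1, V, log_transform.
apply is_derive_unique; auto_derive.
- split; [apply Rgt_not_eq, exp_pos | split; [apply (Hsmooth _ _ Ht Hx) | auto]].
- unfold d2; pose proof (exp_pos (xb + mu * tb)); field; lra.
Qed.

Lemma d22_log_transform tb xb : 0 < tb ->
  d2 (d2 V) tb xb =
    / exp (xb + mu * tb) * u (lam * tb) (beta * exp (xb + mu * tb))
    - beta * d2 u (lam * tb) (beta * exp (xb + mu * tb))
    + beta * (beta * exp (xb + mu * tb))
        * d2 (d2 u) (lam * tb) (beta * exp (xb + mu * tb)).
Proof.
intros Htb; destruct (log_transform_image_pos tb xb Htb) as [Ht Hx].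
unfold d2 at 1.
rewrite (Derive_ext _ _ _ (fun y => d2_log_transform tb y Htb)).
apply is_derive_unique; auto_derive.
- destruct (Hsmooth _ _ Ht Hx) as (_ & Hux & Huxx & _).
  split; [apply Rgt_not_eq, exp_pos | tauto].
- unfold d2; pose proof (exp_pos (xb + mu * tb)); field; lra.
Qed.

Lemma d1_log_transform tb xb : 0 < tb ->
  d1 V tb xb =
    / exp (xb + mu * tb)
      * (lam * d1 u (lam * tb) (beta * exp (xb + mu * tb))
         + mu * (beta * exp (xb + mu * tb))
             * d2 u (lam * tb) (beta * exp (xb + mu * tb)))
    - mu / exp (xb + mu * tb) * u (lam * tb) (beta * exp (xb + mu * tb))
    + alpha * mu - gamma.
Proof.
intros Htb; destruct (log_transform_image_pos tb xb Htb) as [Ht Hx].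
set (G := fun s => u (lam * s) (beta * exp (xb + mu * s))).
assert (HG : is_derive G tb
  (d1 u (lam * tb) (beta * exp (xb + mu * tb)) * lam
   + d2 u (lam * tb) (beta * exp (xb + mu * tb)) * (beta * exp (xb + mu * tb) * mu))).
{ apply is_derive_Reals, derivable_pt_lim_comp_2d.
  - apply smooth_BS_differentiable; auto.
  - apply is_derive_Reals; auto_derive; [auto | ring].
  - apply is_derive_Reals; auto_derive; [auto | ring]. }
change (d1 V tb xb)
  with (Derive (fun s => / exp (xb + mu * s) * G s + alpha * (xb + mu * s) - gamma * s) tb).
apply is_derive_unique; auto_derive.
- split; [apply Rgt_not_eq, exp_pos | split; [eexists; exact HG | auto]].
- change (Derive (fun s => G s) tb) with (Derive G tb).
  rewrite (is_derive_unique _ _ _ HG); unfold G.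
  pose proof (exp_pos (xb + mu * tb)); field; lra.
Qed.

Lemma target_op_log_transform a b c tb xb : 0 < tb ->
  alpha = a * lam / 2 -> beta = b * lam -> mu = c * lam ->
  gamma = alpha ^ 2 + alpha * mu ->
  target_op V tb xb =
    lam / exp (xb + mu * tb) * BS_op a b c u (lam * tb) (beta * exp (xb + mu * tb)).
Proof.
intros Htb Ha Hb Hc Hg.
unfold target_op, BS_op.
rewrite d1_log_transform, d2_log_transform, d22_log_transform by exact Htb.
pose proof (exp_pos (xb + mu * tb)).
subst gamma alpha beta mu; field; lra.
Qed.

Lemma solves_BS_iff_log_transform a b c :
  alpha = a * lam / 2 -> beta = b * lam -> mu = c * lam ->
  gamma = alpha ^ 2 + alpha * mu ->
  solves_BS a b c u <-> solves_target V.
Proof.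
intros Ha Hb Hc Hg; split.
- intros Hu tb xb Htb; destruct (log_transform_image_pos tb xb Htb) as [Ht Hx].
  change (target_op V tb xb = 0).
  rewrite (target_op_log_transform a b c tb xb Htb Ha Hb Hc Hg).
  unfold BS_op; rewrite (Hu _ _ Ht Hx); ring.
- intros HV t x Ht Hx.
  set (tb := t / lam); set (xb := ln (x / beta) - mu * tb).
  assert (Htb : 0 < tb) by (apply Rdiv_lt_0_compat; lra).
  assert (Ht' : lam * tb = t) by (unfold tb; field; lra).
  assert (Hx' : beta * exp (xb + mu * tb) = x).
  { unfold xb; replace (ln (x / beta) - mu * tb + mu * tb) with (ln (x / beta)) by ring.
    rewrite exp_ln by (apply Rdiv_lt_0_compat; lra); field; lra. }
  pose proof (target_op_log_transform a b c tb xb Htb Ha Hb Hc Hg) as Hkey.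
  rewrite Ht', Hx' in Hkey.
  assert (Hfac : lam / exp (xb + mu * tb) <> 0)
    by (pose proof (exp_pos (xb + mu * tb)); apply Rgt_not_eq, Rdiv_lt_0_compat; lra).
  change (BS_op a b c u t x = 0).
  apply (Rmult_eq_reg_l (lam / exp (xb + mu * tb))); [| exact Hfac].
  rewrite <- Hkey, Rmult_0_r; apply (HV tb xb Htb).
Qed.

End LogTransform.

Lemma ubar0_log_transform a b u :
  0 < b -> ubar0 a b u = log_transform 1 b 0 (a / 2) (a ^ 2 / 4) u.
Proof.
intros Hb; apply functional_extensionality; intros tb;
  apply functional_extensionality; intros xb.
unfold ubar0, log_transform.
rewrite Rmult_0_l, Rplus_0_r, Rmult_1_l.
replace (b * exp xb / b) with (exp xb) by (field; lra).
rewrite ln_exp; pose proof (exp_pos xb); field; lra.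
Qed.

Lemma ubarc_log_transform a b c u : 0 < b -> 0 < c ->
  ubarc a b c u
  = log_transform (/ c) (b / c) 1 (a / (2 * c)) (a / 2 * (1 + a / (2 * c)) / c) u.
Proof.
intros Hb Hc; apply functional_extensionality; intros tb;
  apply functional_extensionality; intros xb.
unfold ubarc, log_transform.
rewrite Rmult_1_l, (Rmult_comm (/ c)).
replace (c * (b / c * exp (xb + tb)) / b) with (exp (xb + tb)) by (field; lra).
rewrite ln_exp; pose proof (exp_pos (xb + tb)); unfold Rdiv; field; lra.
Qed.

Theorem mainTheorem1 (a b c : R) (u : R -> R -> R) :
  0 < a -> 0 < b -> 0 <= c -> smooth_BS u ->
  (c = 0 -> (solves_BS a b c u <-> solves_target (ubar0 a b u))) /\
  (0 < c -> (solves_BS a b c u <-> solves_target (ubarc a b c u))).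
Proof.
intros _ Hb _ Hs; split.
- intros ->; rewrite ubar0_log_transform by exact Hb.
  apply solves_BS_iff_log_transform; auto; try lra; field.
- intros Hc0; rewrite ubarc_log_transform by assumption.
  apply solves_BS_iff_log_transform; auto using Rinv_0_lt_compat, Rdiv_lt_0_compat;
    field; lra.
Qed.
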